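(* Let $A\in\mathbb{C}^{n\times n}$ and let $\|\cdot\|$ be any vector norm on $\mathbb{C}^n$ with induced matrix norm. Then $\inf_{t\in\mathbb{R}}\|Q_1(t)\|>0$, and for every $u\in\mathbb{C}^n$ satisfying the RLGE condition, $\inf_{t\in\mathbb{R}}\|Q_1(t)u\|>0$. Consequently, for $y_0\neq0$ and unit $\hat z_0$ both satisfying the RLGE condition, the functions $t\mapsto \|Q_1(t)\hat z_0\|/\|Q_1(t)\hat y_0\|$ and $t\mapsto \|Q_1(t)\|/\|Q_1(t)\hat y_0\|$ are bounded on $\mathbb{R}$ and bounded away from $0$ on $\mathbb{R}$.
   Context: $\hat y_0=y_0/\|y_0\|$. Let $\lambda_1,\dots,\lambda_p$ be the distinct eigenvalues of $A$, $\omega_i=\operatorname{Im}\lambda_i$. Fix a Jordan basis $v^{(i,j,k)}$, $i\in\{1,\dots,p\}$, $j\in\{1,\dots,d_i\}$ ($d_i$ the geometric multiplicity of $\lambda_i$), $k\in\{1,\dots,m_{ij}\}$, consisting of Jordan chains: $(A-\lambda_iI)v^{(i,j,1)}=0$, $(A-\lambda_iI)v^{(i,j,k)}=v^{(i,j,k-1)}$ for $k\ge2$. Let $V$ be the matrix with these columns in lexicographic order of $(i,j,k)$ and $w^{(i,j,k)}$ the rows of $V^{-1}$ in the same order; $\alpha_{ijk}(u)=w^{(i,j,k)}u$. $\Lambda_1$ is the set of eigenvalues with maximal real part, $M_1=\max_{\lambda_i\in\Lambda_1}\max_j m_{ij}$, and $$Q_1(t)=\sum_{\lambda_i\in\Lambda_1,\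 j\in\{1,\dots,d_i\},\ m_{ij}=M_1} e^{\sqrt{-1}\,\omega_i t}\,v^{(i,j,1)}w^{(i,j,M_1)}.$$ $u$ satisfies the RLGE condition if $\alpha_{ijM_1}(u)\neq0$ for some $(i,j)$ with $\lambda_i\in\Lambda_1$, $m_{ij}=M_1$. *)

From mathcomp Require Import all_boot all_order all_algebra.
From mathcomp Require Import all_classical all_reals all_analysis.
From mathcomp Require Import complex.
Set Implicit Arguments. Unset Strict Implicit. Unset Printing Implicit Defensive.
Import Order.TTheory GRing.Theory Num.Theory.
Local Open Scope ring_scope.
Local Open Scope classical_set_scope.

Definition cexpi (R : realType) (x : R) : R[i] := (cos x +i* sin x)%C.

Definition is_vector_norm (R : realType) (n : nat) (N : 'cV[R[i]]_n -> R) : Prop :=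
  [/\ (forall x, 0 <= N x),
      (forall x, N x = 0 -> x = 0),
      (forall (c : R[i]) x, N (c *: x) = complex.Re `|c| * N x)
    & (forall x y, N (x + y) <= N x + N y)].

Definition ind_norm (R : realType) (n : nat) (N : 'cV[R[i]]_n -> R)
    (M : 'M[R[i]]_n) : R :=
  sup [set N (M *m x) | x in [set x | N x = 1]].

(* The Jordan chains are indexed by c : 'I_q (these are the
   pairs (i,j) of the paper, flattened); chain c has eigenvalue lam c and length
   m c.  Column l of the invertible matrix V is the vector v^{(c,k)} with
   c = ch l, k = pos l.  The rows of invmx V are the w^{(c,k)} in the same order. *)
Definition jordan_basis (R : realType) (n q : nat) (A : 'M[R[i]]_n)
    (lam : 'I_q -> R[i]) (m : 'I_q -> nat) (ch : 'I_n -> 'I_q)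
    (pos : 'I_n -> nat) (V : 'M[R[i]]_n) : Prop :=
  V \in unitmx /\
  (forall c, 0 < m c)%N /\
  (forall l, 1 <= pos l <= m (ch l))%N /\
  (forall l l', ch l = ch l' -> pos l = pos l' -> l = l') /\
  (forall c k, (1 <= k <= m c)%N -> exists l, ch l = c /\ pos l = k) /\
  (forall l, pos l = 1%N -> (A - (lam (ch l))%:M) *m col l V = 0) /\
  (forall l, (1 < pos l)%N -> exists l', [/\ ch l' = ch l, pos l' = (pos l).-1
          & (A - (lam (ch l))%:M) *m col l V = col l' V]).

Definition inLam1 (R : realType) (q : nat) (lam : 'I_q -> R[i]) (c : 'I_q) : bool :=
  [forall c' : 'I_q, complex.Re (lam c') <= complex.Re (lam c)].

Definition M1 (R : realType) (q : nat) (lam : 'I_q -> R[i]) (m : 'I_q -> nat) : nat :=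
  (\max_(c < q | inLam1 lam c) m c)%N.

Definition Q1 (R : realType) (n q : nat) (lam : 'I_q -> R[i]) (m : 'I_q -> nat)
    (ch : 'I_n -> 'I_q) (pos : 'I_n -> nat) (V : 'M[R[i]]_n) (t : R) : 'M[R[i]]_n :=
  \sum_(l1 < n) \sum_(l2 < n | [&& ch l1 == ch l2, inLam1 lam (ch l1),
        m (ch l1) == M1 lam m, pos l1 == 1%N & pos l2 == M1 lam m])
     cexpi (complex.Im (lam (ch l1)) * t) *: (col l1 V *m row l2 (invmx V)).

Definition RLGE (R : realType) (n q : nat) (lam : 'I_q -> R[i]) (m : 'I_q -> nat)
    (ch : 'I_n -> 'I_q) (pos : 'I_n -> nat) (V : 'M[R[i]]_n) (u : 'cV[R[i]]_n) : Prop :=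
  exists l : 'I_n, [/\ inLam1 lam (ch l), m (ch l) = M1 lam m, pos l = M1 lam m
                     & row l (invmx V) *m u != 0].

From Pilot Require Import Defs.
From mathcomp Require Import all_boot all_order all_algebra.
From mathcomp Require Import all_classical all_reals all_analysis.
From mathcomp Require Import complex.
From mathcomp Require Import lra.
Set Implicit Arguments. Unset Strict Implicit. Unset Printing Implicit Defensive.
Import Order.TTheory GRing.Theory Num.Theory Normc.
Import numFieldNormedType.Exports.
Local Open Scope ring_scope.
Local Open Scope classical_set_scope.
Local Open Scope complex_scope.

(* In the Jordan basis, Q_1(t) = V D(t) V^-1 where the only nonzero entries of
   D(t) are unimodular factors e^{i omega t}, placed at (head, tail) of the longest
   chains of eigenvalues with maximal real part.  Hence the entries of Q_1(t) are
   bounded uniformly in t, which gives the upper bounds.  Conversely the coordinate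
   of V^-1 Q_1(t) u at the head of such a chain c is e^{i omega t} alpha_{c,M_1}(u),
   whose modulus does not depend on t; since every norm on C^n dominates a multiple
   of each coordinate modulus (compactness of the unit sphere), N(Q_1(t) u) stays
   away from 0 when u satisfies the RLGE condition.  A normalized RLGE vector then
   bounds the induced norm from below, and the ratio bounds follow. *)

Section ComplexModulus.
Variable R : realType.
Implicit Types (z : R[i]) (x : R).

Lemma Re_normc z : complex.Re `|z| = normc z.
Proof. by case: z. Qed.

Lemma normc_ge0 z : 0 <= normc z.
Proof. by case: z => a b; exact: sqrtr_ge0. Qed.

Lemma normc_real x : normc x%:C = `|x|.
Proof. by rewrite /= expr0n /= addr0 sqrtr_sqr. Qed.

Lemma normc_cexpi x : normc (cexpi x) = 1.
Proof. by rewrite /= cos2Dsin2 sqrtr1. Qed.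

Lemma normc_le_ReIm z : normc z <= `|complex.Re z| + `|complex.Im z|.
Proof.
case: z => a b /=; rewrite -[leRHS]ger0_norm ?addr_ge0 // -sqrtr_sqr.
apply: ler_wsqrtr; rewrite sqrrD !real_normK ?num_real // lerD2r lerDl.
by rewrite mulrn_wge0 // mulr_ge0.
Qed.

Lemma normc_sum (I : Type) (r : seq I) (P : pred I) (F : I -> R[i]) :
  normc (\sum_(i <- r | P i) F i) <= \sum_(i <- r | P i) normc (F i).
Proof.
elim/big_rec2: _ => [|i y1 y2 _ IH]; first by rewrite normc0.
by apply: le_trans (@le_normcD R (F i) y2) _; rewrite lerD2l.
Qed.

Lemma normc_mulmx_le k n p (M : 'M[R[i]]_(k, n)) (P : 'M[R[i]]_(n, p)) i j :
  normc ((M *m P) i j) <= \sum_l normc (M i l) * normc (P l j).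
Proof.
by rewrite mxE; apply: le_trans (normc_sum _ _ _) _; apply: ler_sum => l _; rewrite normcM.
Qed.

End ComplexModulus.

Section RealBounds.
Variable R : realType.

Lemma inf_image_ge (T : Type) (t0 : T) (f : T -> R) d :
  (forall t, d <= f t) -> d <= inf [set f t | t in [set: T]].
Proof.
move=> hd; apply: lb_le_inf; first by exists (f t0), t0.
by move=> _ [t _ <-].
Qed.

Lemma ratio_bounded (T : Type) (t0 : T) (f g : T -> R) d1 d2 U :
  0 < d1 -> 0 < d2 -> (forall t, d1 <= f t <= U) -> (forall t, d2 <= g t <= U) ->
  exists c1 c2 : R, 0 < c1 /\ forall t, c1 <= f t / g t <= c2.
Proof.
move=> d1_gt0 d2_gt0 hf hg.
have U_gt0 : 0 < U by case/andP: (hf t0) => /(lt_le_trans d1_gt0); apply: lt_le_trans.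
exists (d1 / U), (U / d2); split => [|t]; first by rewrite divr_gt0.
case/andP: (hf t) => f_ge f_le; case/andP: (hg t) => g_ge g_le.
have f_gt0 : 0 < f t := lt_le_trans d1_gt0 f_ge.
have g_gt0 : 0 < g t := lt_le_trans d2_gt0 g_ge.
by apply/andP; split; apply: ler_pM; rewrite ?invr_ge0 ?lef_pV2 ?posrE // ltW.
Qed.

End RealBounds.

Section VectorNorm.
Variables (R : realType) (n : nat) (N : 'cV[R[i]]_n -> R).
Hypothesis hN : is_vector_norm N.
Implicit Types (x y : 'cV[R[i]]_n) (u v : 'rV[R]_(n + n)).

Lemma vnorm_ge0 x : 0 <= N x. Proof. by case: hN. Qed.
Lemma vnorm_eq0 x : N x = 0 -> x = 0. Proof. by case: hN => _ h _ _; exact: h. Qed.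
Lemma vnormZ c x : N (c *: x) = normc c * N x.
Proof. by case: hN => _ _ h _; rewrite h Re_normc. Qed.
Lemma vnormD x y : N (x + y) <= N x + N y. Proof. by case: hN => _ _ _ h; exact: h. Qed.

Lemma vnorm_gt0 x : x != 0 -> 0 < N x.
Proof. by move=> x0; rewrite lt_def vnorm_ge0 andbT; apply: contra x0 => /eqP/vnorm_eq0->. Qed.

Lemma vnorm0 : N 0 = 0.
Proof. by rewrite -(scale0r (0 : 'cV_n)) vnormZ normc0 mul0r. Qed.

Lemma vnormN x : N (- x) = N x.
Proof. by rewrite -scaleN1r vnormZ normcN normc1 mul1r. Qed.

Lemma vnormB_ge x y : `|N x - N y| <= N (x - y).
Proof.
have h1 : N x <= N (x - y) + N y by rewrite -{1}(subrK y x) vnormD.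
have h2 : N y <= N (x - y) + N x.
  by rewrite -[N (x - y)]vnormN opprB -{1}(subrK x y) vnormD.
by rewrite ler_norml; apply/andP; split; lra.
Qed.

Lemma vnorm_sum (I : Type) (r : seq I) (P : pred I) (F : I -> 'cV[R[i]]_n) :
  N (\sum_(i <- r | P i) F i) <= \sum_(i <- r | P i) N (F i).
Proof.
elim/big_rec2: _ => [|i y1 y2 _ IH]; first by rewrite vnorm0.
by apply: le_trans (vnormD _ _) _; rewrite lerD2l.
Qed.

Lemma vnorm_le_coords x : N x <= \sum_i normc (x i 0) * N (delta_mx i 0).
Proof.
rewrite {1}(matrix_sum_delta x); apply: le_trans (vnorm_sum _ _ _) _.
by apply: ler_sum => i _; rewrite big_ord1 vnormZ (ord1 0).
Qed.

(* C^n is identified with R^(2n) through real and imaginary parts, so that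
   compactness of the Euclidean unit sphere becomes available. *)
Definition col_of_ReIm u : 'cV[R[i]]_n :=
  \col_i (u 0 (lshift n i) +i* u 0 (rshift n i)).

Definition ReIm_of_col x : 'rV[R]_(n + n) :=
  row_mx (\row_k complex.Re (x k 0)) (\row_k complex.Im (x k 0)).

Lemma ReIm_of_colK x : col_of_ReIm (ReIm_of_col x) = x.
Proof.
apply/matrixP => k j; rewrite (ord1 j) mxE row_mxEl row_mxEr !mxE.
by case: (x k 0).
Qed.

Lemma col_of_ReImB u v :
  col_of_ReIm (u - v) = col_of_ReIm u - col_of_ReIm v.
Proof. by apply/matrixP => i j; rewrite !mxE. Qed.

Lemma col_of_ReImZ r u :
  col_of_ReIm (r *: u) = r%:C *: col_of_ReIm u.
Proof.
apply/matrixP => i j; rewrite !mxE; apply/eqP; rewrite eq_complex /=.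
by rewrite !mul0r subr0 addr0 !eqxx.
Qed.

Lemma col_of_ReIm_eq0 u : col_of_ReIm u = 0 -> u = 0.
Proof.
move/matrixP => h; apply/rowP => j; rewrite mxE; case: (split_ordP j) => k ->.
  by have := congr1 (@complex.Re R) (h k 0); rewrite !mxE.
by have := congr1 (@complex.Im R) (h k 0); rewrite !mxE.
Qed.

Lemma normc_col_of_ReIm u i : normc (col_of_ReIm u i 0) <= 2 * `|u|.
Proof.
have entry_le j : `|u 0 j| <= `|u|.
  by rewrite [leRHS]/Num.norm /= mx_normrE; apply/bigmax_geP; right; exists (0, j).
apply: le_trans (normc_le_ReIm _) _; rewrite !mxE /= mulr2n mulrDl mul1r.
by rewrite lerD.
Qed.

Lemma continuous_vnorm_col_of_ReIm : continuous (N \o col_of_ReIm).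
Proof.
pose K := \sum_i N (delta_mx i 0 : 'cV[R[i]]_n).
have K0 : 0 <= K by apply: sumr_ge0 => i _; exact: vnorm_ge0.
have lip u v : `|N (col_of_ReIm u) - N (col_of_ReIm v)| <= (2 * K + 1) * `|u - v|.
  apply: le_trans (vnormB_ge _ _) _; rewrite -col_of_ReImB.
  apply: le_trans (vnorm_le_coords _) _.
  apply: (@le_trans _ _ ((2 * `|u - v|) * K)).
    rewrite /K mulr_sumr; apply: ler_sum => i _.
    by rewrite ler_wpM2r ?vnorm_ge0 ?normc_col_of_ReIm.
  by rewrite mulrC mulrA ler_wpM2r // mulrC lerDl.
have K1 : 0 < 2 * K + 1 by rewrite ltr_wpDl ?mulr_ge0.
move=> u; apply/(@cvgrPdist_lt _ _ _ (nbhs u)) => e e0; near=> v.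
apply: le_lt_trans (lip u v) _; rewrite -ltr_pdivlMl //.
by near: v; apply: cvgr_dist_lt => //; rewrite mulr_gt0 ?invr_gt0.
Unshelve. all: by end_near.
Qed.

(* N \o col_of_ReIm attains a positive minimum on the Euclidean unit sphere;
   conclude by homogeneity. *)
Lemma vnorm_col_of_ReIm_ge :
  exists2 c, 0 < c & forall u, c * `|u| <= N (col_of_ReIm u).
Proof.
have [ex0|all0] := pselect (exists u, u != 0); last first.
  exists 1 => // u; have [->|u0] := eqVneq u 0; last by case: all0; exists u.
  by rewrite normr0 mulr0 vnorm_ge0.
pose S := [set u : 'rV[R]_(n + n) | `|u| = 1].
have S_normalize u : u != 0 -> S (`|u|^-1 *: u).
  move=> u0; rewrite /S /= normrZ normrV ?unitfE ?normr_eq0 //.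
  by rewrite normr_id mulVf // normr_eq0.
have S0 : S !=set0 by case: ex0 => u /S_normalize Sy; exists (`|u|^-1 *: u).
have Sc : compact S.
  apply: bounded_closed_compact; first by exists 1; split => // M M1 u /= ->; exact: ltW.
  rewrite (_ : S = (fun u : 'rV[R]_(n + n) => `|u|) @^-1` [set 1]) //.
  apply: preimage_closed; last exact: closed_eq.
  by move=> u _; exact: norm_continuous.
have [ys Sys miny] := EVT_min_rV S0 Sc (continuous_subspaceT continuous_vnorm_col_of_ReIm).
have ysS : S ys by rewrite inE in Sys.
have c0 : 0 < N (col_of_ReIm ys).
  apply: vnorm_gt0; apply: contraPneq ysS => /col_of_ReIm_eq0 ->.
  by rewrite /S /= normr0 => /esym/eqP; rewrite oner_eq0.
exists (N (col_of_ReIm ys)) => // u; have [->|u0] := eqVneq u 0.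
  by rewrite normr0 mulr0 vnorm_ge0.
have := miny (`|u|^-1 *: u); rewrite inE => /(_ (S_normalize u u0)) /=.
rewrite col_of_ReImZ vnormZ normc_real ger0_norm ?invr_ge0 // mulrC => h.
by rewrite -ler_pdivlMr ?normr_gt0.
Qed.

Lemma vnorm_coord_ge : exists2 c, 0 < c & forall x i, c * normc (x i 0) <= N x.
Proof.
have [c c0 hc] := vnorm_col_of_ReIm_ge.
exists (c / 2); first by rewrite divr_gt0.
move=> x i; have := hc (ReIm_of_col x); rewrite ReIm_of_colK; apply: le_trans.
have := normc_col_of_ReIm (ReIm_of_col x) i; rewrite ReIm_of_colK => h.
by rewrite mulrAC ler_pdivrMr // -mulrA (mulrC _ 2) ler_pM2l.
Qed.

End VectorNorm.

Section CoordinateBounds.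
Variables (R : realType) (n : nat) (N : 'cV[R[i]]_n -> R) (c : R).
Hypotheses (hN : is_vector_norm N) (c_gt0 : 0 < c)
  (hc : forall (x : 'cV[R[i]]_n) i, c * normc (x i 0) <= N x).
Implicit Type x : 'cV[R[i]]_n.

Lemma normc_coord_le x i : normc (x i 0) <= N x / c.
Proof. by rewrite ler_pdivlMr // mulrC hc. Qed.

Lemma normc_mulmx_coord_le k (M : 'M[R[i]]_(k, n)) x i :
  normc ((M *m x) i 0) <= (\sum_j normc (M i j)) * (N x / c).
Proof.
apply: le_trans (normc_mulmx_le _ _ _ _) _; rewrite mulr_suml.
by apply: ler_sum => j _; rewrite ler_wpM2l ?normc_ge0 ?normc_coord_le.
Qed.

Lemma vnorm_mulmx_le (M : 'M[R[i]]_n) x :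
  N (M *m x) <= (\sum_i (\sum_j normc (M i j)) * N (delta_mx i 0)) * (N x / c).
Proof.
apply: le_trans (vnorm_le_coords hN _) _.
rewrite mulr_suml; apply: ler_sum => i _.
by rewrite mulrAC ler_wpM2r ?(vnorm_ge0 hN) ?normc_mulmx_coord_le.
Qed.

End CoordinateBounds.

Lemma ind_norm_bounds (R : realType) n (N : 'cV[R[i]]_n -> R) (M : 'M[R[i]]_n) x d K :
  N x = 1 -> d <= N (M *m x) -> (forall y, N (M *m y) <= K * N y) ->
  d <= ind_norm N M <= K.
Proof.
move=> Nx1 Mx_ge M_le; set E := [set N (M *m y) | y in [set y | N y = 1]].
have E_ub : ubound E K by move=> _ [y /= Ny1 <-]; rewrite -[K]mulr1 -Ny1.
apply/andP; split; last by apply: ge_sup => //; exists (N (M *m x)), x.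
by apply: le_trans Mx_ge (ub_le_sup _ _); [exists K | exists x].
Qed.

Section LeadingTerm.
Variables (R : realType) (n q : nat) (A : 'M[R[i]]_n) (lam : 'I_q -> R[i])
  (m : 'I_q -> nat) (ch : 'I_n -> 'I_q) (pos : 'I_n -> nat) (V : 'M[R[i]]_n).
Hypothesis hJ : jordan_basis A lam m ch pos V.

Local Notation Q1 := (Q1 lam m ch pos V).
Local Notation RLGE := (RLGE lam m ch pos V).

Definition Q1_index (l1 l2 : 'I_n) : bool := [&& ch l1 == ch l2, inLam1 lam (ch l1),
  m (ch l1) == M1 lam m, pos l1 == 1%N & pos l2 == M1 lam m].

Definition Q1_coef (t : R) : 'M[R[i]]_n :=
  \matrix_(l1, l2) (if Q1_index l1 l2 then cexpi (complex.Im (lam (ch l1)) * t) else 0).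

Lemma Q1E t : Q1 t = V *m Q1_coef t *m invmx V.
Proof.
apply/matrixP => i j; rewrite /Defs.Q1 summxE [RHS]mxE.
under [RHS]eq_bigr do rewrite mxE big_distrl /=.
rewrite exchange_big /=; apply: eq_bigr => l1 _.
rewrite summxE big_mkcond /=; apply: eq_bigr => l2 _.
rewrite !mxE /Q1_index; case: ifP => _; last by rewrite mulr0 mul0r.
by rewrite big_ord1 !mxE mulrCA mulrA.
Qed.

Lemma invmx_Q1 t : invmx V *m Q1 t = Q1_coef t *m invmx V.
Proof. by case: hJ => hV _; rewrite Q1E !mulmxA mulVmx // mul1mx. Qed.

Lemma normc_Q1_coef_le1 t l1 l2 : normc (Q1_coef t l1 l2) <= 1.
Proof. by rewrite mxE; case: ifP => _; rewrite ?normc_cexpi ?normc0. Qed.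

Lemma normc_Q1_le t i j :
  normc (Q1 t i j) <= \sum_k \sum_l normc (V i l) * normc (invmx V k j).
Proof.
rewrite Q1E; apply: le_trans (normc_mulmx_le _ _ _ _) _; apply: ler_sum => k _.
apply: le_trans (ler_wpM2r (normc_ge0 _) (normc_mulmx_le _ _ _ _)) _.
rewrite mulr_suml; apply: ler_sum => l _; rewrite ler_wpM2r ?normc_ge0 //.
by rewrite ler_piMr ?normc_ge0 ?normc_Q1_coef_le1.
Qed.

Lemma invmx_Q1_mulmx_head t (u : 'cV[R[i]]_n) (l l1 : 'I_n) :
  inLam1 lam (ch l) -> m (ch l) = M1 lam m -> pos l = M1 lam m ->
  ch l1 = ch l -> pos l1 = 1%N ->
  (invmx V *m (Q1 t *m u)) l1 0 = cexpi (complex.Im (lam (ch l)) * t) * (invmx V *m u) l 0.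
Proof.
move=> hl hml hpl hcl1 hpl1; case: hJ => _ [_ [_ [chain_inj _]]].
rewrite mulmxA invmx_Q1 -mulmxA mxE (bigD1 l) //= big1 ?addr0.
  by rewrite mxE /Q1_index hcl1 eqxx hl hml hpl1 hpl !eqxx.
move=> l2 l2l; rewrite mxE /Q1_index; case: ifP => [|_]; last by rewrite mul0r.
case/and5P => /eqP e1 _ _ _ /eqP e2.
suff el : l2 = l by rewrite el eqxx in l2l.
by apply: chain_inj; [rewrite -e1 hcl1 | rewrite e2 hpl].
Qed.

Lemma Q1_RLGE_lower (N : 'cV[R[i]]_n -> R) : is_vector_norm N ->
  forall u, RLGE u -> exists2 d, 0 < d & forall t, d <= N (Q1 t *m u).
Proof.
move=> hN u [l [hl hml hpl hu]].
have [c c_gt0 hc] := vnorm_coord_ge hN.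
have [l1 [hcl1 hpl1]] : exists l1, ch l1 = ch l /\ pos l1 = 1%N.
  by case: hJ => _ [m_gt0 [_ [_ [chain_ex _]]]]; apply: chain_ex; rewrite leqnn m_gt0.
pose a := normc ((invmx V *m u) l 0).
have a_gt0 : 0 < a.
  rewrite lt_def normc_ge0 andbT; apply: contra hu => /eqP/eq0_normc a0.
  by apply/eqP/rowP => j; rewrite (ord1 j) -row_mul mxE a0 mxE.
pose S := \sum_j normc (invmx V l1 j).
have S_ge0 : 0 <= S by apply: sumr_ge0 => j _; exact: normc_ge0.
exists (a * c / (S + 1)) => [|t]; first by rewrite divr_gt0 ?mulr_gt0 // ltr_wpDl.
have : a <= S * (N (Q1 t *m u) / c).
  rewrite /a -[X in X <= _](mul1r) -(normc_cexpi (complex.Im (lam (ch l)) * t)) -normcM.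
  by rewrite -(invmx_Q1_mulmx_head t u hl hml hpl hcl1 hpl1) normc_mulmx_coord_le.
rewrite mulrA ler_pdivlMr // ler_pdivrMr ?ltr_wpDl // => /le_trans; apply.
by rewrite mulrC ler_wpM2l ?(vnorm_ge0 hN) ?lerDl.
Qed.

Lemma Q1_mulmx_le (N : 'cV[R[i]]_n -> R) :
  is_vector_norm N -> exists K, forall t x, N (Q1 t *m x) <= K * N x.
Proof.
move=> hN; have [c c_gt0 hc] := vnorm_coord_ge hN.
pose B i j := \sum_k \sum_l normc (V i l) * normc (invmx V k j).
exists ((\sum_i (\sum_j B i j) * N (delta_mx i 0)) / c) => t x.
apply: le_trans (vnorm_mulmx_le hN c_gt0 hc _ _) _; rewrite mulrAC -mulrA.
apply: ler_wpM2r; first by rewrite divr_ge0 ?(vnorm_ge0 hN) ?ltW.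
apply: ler_sum => i _.
by rewrite ler_wpM2r ?(vnorm_ge0 hN) //; apply: ler_sum => j _; exact: normc_Q1_le.
Qed.

End LeadingTerm.

Section RLGEVectors.
Variables (R : realType) (n q : nat) (A : 'M[R[i]]_n) (lam : 'I_q -> R[i])
  (m : 'I_q -> nat) (ch : 'I_n -> 'I_q) (pos : 'I_n -> nat) (V : 'M[R[i]]_n).
Local Notation RLGE := (RLGE lam m ch pos V).

Lemma RLGE_scale (a : R) u : a != 0 -> RLGE u -> RLGE (a%:C *: u).
Proof.
move=> a0 [l [hl hml hpl hu]]; exists l; split => //.
by rewrite -scalemxAr scaler_eq0 negb_or hu fmorph_eq0 a0.
Qed.

Lemma RLGE_normalize (N : 'cV[R[i]]_n -> R) u : is_vector_norm N ->
  u != 0 -> RLGE u -> N ((N u)^-1%:C *: u) = 1 /\ RLGE ((N u)^-1%:C *: u).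
Proof.
move=> hN u0 hu; have Nu_gt0 := vnorm_gt0 hN u0.
split; last by apply: RLGE_scale; rewrite // invr_eq0 gt_eqF.
by rewrite (vnormZ hN) normc_real ger0_norm ?invr_ge0 ?ltW // mulVf // gt_eqF.
Qed.

Lemma exists_RLGE : jordan_basis A lam m ch pos V -> (0 < n)%N ->
  exists2 u, u != 0 & RLGE u.
Proof.
case=> hV [m_gt0 [_ [_ [chain_ex _]]]] n_gt0.
have [cs _ cs_max] := @arg_maxP _ _ _ (ch (Ordinal n_gt0)) xpredT
  (fun c => complex.Re (lam c)) isT.
have cs_Lam1 : inLam1 lam cs by apply/forallP => c'; exact: cs_max.
have [c1 c1_Lam1 M1E] := @eq_bigmax_cond _ (inLam1 lam) m
  (introT card_gt0P (ex_intro _ cs cs_Lam1)).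
have [l [hcl hpl]] : exists l, ch l = c1 /\ pos l = m c1.
  by apply: chain_ex; rewrite leqnn m_gt0.
have Wl : (invmx V *m col l V) l 0 = 1 by rewrite colE mulKmx // mxE !eqxx.
exists (col l V).
  by apply: contra_neq (oner_neq0 (R[i])) => u0; rewrite -Wl u0 mulmx0 mxE.
have M1_eq : M1 lam m = m c1 by rewrite -M1E.
exists l; split; rewrite ?hcl ?hpl ?M1_eq //.
rewrite -row_mul; apply: contra_neq (oner_neq0 (R[i])) => /rowP/(_ 0).
by rewrite [LHS]mxE Wl [RHS]mxE.
Qed.

End RLGEVectors.

Theorem mainTheorem2 (R : realType) (n q : nat) (A : 'M[R[i]]_n)
    (N : 'cV[R[i]]_n -> R)
    (lam : 'I_q -> R[i]) (m : 'I_q -> nat) (ch : 'I_n -> 'I_q)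
    (pos : 'I_n -> nat) (V : 'M[R[i]]_n) :
  (0 < n)%N ->
  is_vector_norm N ->
  jordan_basis A lam m ch pos V ->
  [/\ 0 < inf [set ind_norm N (Q1 lam m ch pos V t) | t in [set: R]],
      (forall u : 'cV[R[i]]_n, RLGE lam m ch pos V u ->
         0 < inf [set N (Q1 lam m ch pos V t *m u) | t in [set: R]])
    & (forall y0 z0 : 'cV[R[i]]_n, y0 != 0 -> N z0 = 1 ->
         RLGE lam m ch pos V y0 -> RLGE lam m ch pos V z0 ->
         let yh := real_complex R ((N y0)^-1) *: y0 in
         (exists c1 c2 : R, 0 < c1 /\ forall t : R,
            c1 <= N (Q1 lam m ch pos V t *m z0) / N (Q1 lam m ch pos V t *m yh) <= c2) /\
         (exists c1 c2 : R, 0 < c1 /\ forall t : R,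
            c1 <= ind_norm N (Q1 lam m ch pos V t) / N (Q1 lam m ch pos V t *m yh) <= c2))].
Proof.
move=> n_gt0 hN hJ; set Q := Q1 lam m ch pos V.
have [K Q_le] := Q1_mulmx_le lam m ch pos V hN.
have Q_ge := Q1_RLGE_lower hJ hN.
have Q_unit_bounds x : N x = 1 -> RLGE lam m ch pos V x ->
    exists2 d, 0 < d & forall t, d <= N (Q t *m x) <= K.
  move=> Nx1 /Q_ge [d d_gt0 Qx_ge]; exists d => // t.
  by rewrite Qx_ge -[K]mulr1 -Nx1 Q_le.
have [x x_neq0 RLGEx] := exists_RLGE hJ n_gt0.
have [Nx1 RLGEx1] := RLGE_normalize hN x_neq0 RLGEx.
have [dx dx_gt0 Qx_bounds] := Q_unit_bounds _ Nx1 RLGEx1.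
have ind_norm_Q t : dx <= ind_norm N (Q t) <= K.
  by case/andP: (Qx_bounds t) => Qx_ge _; exact: ind_norm_bounds Nx1 Qx_ge (Q_le t).
split.
- by apply: lt_le_trans dx_gt0 (inf_image_ge 0 _) => t; case/andP: (ind_norm_Q t).
- by move=> u /Q_ge [d d_gt0 Qu_ge]; apply: lt_le_trans d_gt0 (inf_image_ge 0 Qu_ge).
move=> y0 z0 y0_neq0 Nz1 RLGEy RLGEz yh.
have [Nyh1 RLGEyh] := RLGE_normalize hN y0_neq0 RLGEy.
have [dz dz_gt0 Qz_bounds] := Q_unit_bounds _ Nz1 RLGEz.
have [dy dy_gt0 Qy_bounds] := Q_unit_bounds _ Nyh1 RLGEyh.
split; first exact: (ratio_bounded (0 : R) dz_gt0 dy_gt0 Qz_bounds Qy_bounds).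
exact: (ratio_bounded (0 : R) dx_gt0 dy_gt0 ind_norm_Q Qy_bounds).
Qed.
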